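(* Let $\mathcal{M}$ be a model category and $X,Y$ objects of $\mathcal{M}$. The inclusion of the full subcategory $(\mathrm{WCofib})^{-1}\mathcal{M}(\mathrm{WFib})^{-1}(X,Y)$ into $\mathcal{M}(X,Y)_{\mathrm{Hom}}$ is a homotopy equivalence of categories.
   Context: $\mathcal{M}(X,Y)_{\mathrm{Hom}}$ is the category whose objects are zig-zags $X \xleftarrow{\sim} U \to V \xleftarrow{\sim} Y$ in $\mathcal{M}$ (arrows marked $\sim$ are weak equivalences), a morphism $[X\leftarrow U\to V\leftarrow Y]\to[X\leftarrow U'\to V'\leftarrow Y]$ being a pair of weak equivalences $U\to U'$, $V\to V'$ making the evident diagram (identities on $X$, $Y$) commute. $(\mathrm{WCofib})^{-1}\mathcal{M}(\mathrm{WFib})^{-1}(X,Y)$ is the full subcategory on those zig-zags in which $U\to X$ is a trivial fibration and $Y\to V$ is a trivial cofibration. A functor $F\colon\mathcal{C}\to\mathcal{D}$ is a homotopy equivalence if there is a functor $G\colon\mathcal{D}\to\mathcal{C}$ together with zig-zags of natural transformations connecting $F\circ G$ with $\mathrm{id}_{\mathcal{D}}$ and $G\circ F$ with $\mathrm{id}_{\mathcal{C}}$. *)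

From Stdlib Require Import ProofIrrelevance.

Set Implicit Arguments.
Unset Strict Implicit.

Record Category := {
  ob :> Type;
  hom : ob -> ob -> Type;
  idm : forall A, hom A A;
  comp : forall A B C, hom B C -> hom A B -> hom A C;
  comp_assoc : forall A B C D (h : hom C D) (g : hom B C) (f : hom A B),
      comp h (comp g f) = comp (comp h g) f;
  comp_id_l : forall A B (f : hom A B), comp (idm B) f = f;
  comp_id_r : forall A B (f : hom A B), comp f (idm A) = f
}.
Arguments hom {c} _ _.
Arguments idm {c} _.
Arguments comp {c A B C} _ _.

Record Functor (C D : Category) := {
  fobj :> C -> D;
  fmap : forall A B, hom A B -> hom (fobj A) (fobj B);
  fmap_id : forall A, fmap (idm A) = idm (fobj A);
  fmap_comp : forall A B E (g : hom B E) (f : hom A B),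
      fmap (comp g f) = comp (fmap g) (fmap f)
}.
Arguments fmap {C D} _ {A B} _.

Definition id_functor (C : Category) : Functor C C.
Proof.
  refine {| fobj := fun A => A; fmap := fun A B f => f |}; reflexivity.
Defined.

Definition comp_functor (C D E : Category) (G : Functor D E) (F : Functor C D)
  : Functor C E.
Proof.
  refine {| fobj := fun A => G (F A); fmap := fun A B f => fmap G (fmap F f) |}.
  - intros A; rewrite !fmap_id; reflexivity.
  - intros A B E' g f; rewrite !fmap_comp; reflexivity.
Defined.

Record NatTrans (C D : Category) (F G : Functor C D) := {
  component : forall A, hom (F A) (G A);
  naturality : forall A B (f : hom A B),
      comp (component B) (fmap F f) = comp (fmap G f) (component A)
}.

Inductive nat_zigzag (C D : Category) : Functor C D -> Functor C D -> Prop :=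
| nzz_refl : forall H, nat_zigzag H H
| nzz_fwd : forall H1 H2 H3, NatTrans H1 H2 -> nat_zigzag H2 H3 -> nat_zigzag H1 H3
| nzz_bwd : forall H1 H2 H3, NatTrans H2 H1 -> nat_zigzag H2 H3 -> nat_zigzag H1 H3.

Definition homotopy_equivalence (C D : Category) (F : Functor C D) : Prop :=
  exists G : Functor D C,
    nat_zigzag (comp_functor F G) (id_functor D) /\
    nat_zigzag (comp_functor G F) (id_functor C).

Definition FullSub (C : Category) (P : C -> Prop) : Category.
Proof.
  refine {| ob := {c : C | P c};
            hom := fun a b => hom (proj1_sig a) (proj1_sig b);
            idm := fun a => idm (proj1_sig a);
            comp := fun a b c g f => comp g f |}.
  - intros; apply comp_assoc.
  - intros; apply comp_id_l.
  - intros; apply comp_id_r.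
Defined.

Definition incl (C : Category) (P : C -> Prop) : Functor (FullSub P) C.
Proof.
  refine {| fobj := fun a : FullSub P => proj1_sig a;
            fmap := fun a b f => f |}; reflexivity.
Defined.

Section ModelDefs.
Variable C : Category.
Definition MorClass := forall A B : C, hom A B -> Prop.

Definition is_terminal (T : C) : Prop := forall A : C, exists! f : hom A T, True.
Definition is_initial (I : C) : Prop := forall A : C, exists! f : hom I A, True.

Definition has_pullbacks : Prop :=
  forall (A B Z : C) (f : hom A Z) (g : hom B Z),
  exists (P : C) (p1 : hom P A) (p2 : hom P B),
    comp f p1 = comp g p2 /\
    forall (Q : C) (q1 : hom Q A) (q2 : hom Q B), comp f q1 = comp g q2 ->
      exists! u : hom Q P, comp p1 u = q1 /\ comp p2 u = q2.

Definition has_pushouts : Prop :=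
  forall (Z A B : C) (f : hom Z A) (g : hom Z B),
  exists (P : C) (i1 : hom A P) (i2 : hom B P),
    comp i1 f = comp i2 g /\
    forall (Q : C) (q1 : hom A Q) (q2 : hom B Q), comp q1 f = comp q2 g ->
      exists! u : hom P Q, comp u i1 = q1 /\ comp u i2 = q2.

Definition is_retract (A B A' B' : C) (f : hom A B) (g : hom A' B') : Prop :=
  exists (i : hom A A') (r : hom A' A) (j : hom B B') (s : hom B' B),
    comp r i = idm A /\ comp s j = idm B /\
    comp g i = comp j f /\ comp f r = comp s g.

Definition retract_closed (K : MorClass) : Prop :=
  forall (A B A' B' : C) (f : hom A B) (g : hom A' B'),
    is_retract f g -> K _ _ g -> K _ _ f.

Definition subcat_class (K : MorClass) : Prop :=
  (forall A : C, K A A (idm A)) /\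
  (forall (A B E : C) (f : hom A B) (g : hom B E), K _ _ f -> K _ _ g -> K _ _ (comp g f)).

Definition llp (A B E F : C) (i : hom A B) (p : hom E F) : Prop :=
  forall (u : hom A E) (v : hom B F), comp p u = comp v i ->
    exists h : hom B E, comp h i = u /\ comp p h = v.

Definition cap (K L : MorClass) : MorClass := fun A B f => K A B f /\ L A B f.

Record FunctorialFactorization (L R : MorClass) := {
  ff_ob : forall A B : C, hom A B -> C;
  ff_l : forall A B (f : hom A B), hom A (ff_ob f);
  ff_r : forall A B (f : hom A B), hom (ff_ob f) B;
  ff_fact : forall A B (f : hom A B), comp (ff_r f) (ff_l f) = f;
  ff_L : forall A B (f : hom A B), L _ _ (ff_l f);
  ff_R : forall A B (f : hom A B), R _ _ (ff_r f);
  ff_map : forall A B A' B' (f : hom A B) (f' : hom A' B')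
             (u : hom A A') (v : hom B B'), comp f' u = comp v f ->
             hom (ff_ob f) (ff_ob f');
  ff_map_l : forall A B A' B' (f : hom A B) (f' : hom A' B') u v
               (H : comp f' u = comp v f),
      comp (ff_map H) (ff_l f) = comp (ff_l f') u;
  ff_map_r : forall A B A' B' (f : hom A B) (f' : hom A' B') u v
               (H : comp f' u = comp v f),
      comp (ff_r f') (ff_map H) = comp v (ff_r f);
  ff_map_id : forall A B (f : hom A B) (H : comp f (idm A) = comp (idm B) f),
      ff_map H = idm (ff_ob f);
  ff_map_comp : forall A B A' B' A'' B'' (f : hom A B) (f' : hom A' B')
      (f'' : hom A'' B'') u v u' v'
      (H1 : comp f' u = comp v f) (H2 : comp f'' u' = comp v' f')
      (H12 : comp f'' (comp u' u) = comp (comp v' v) f),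
      ff_map H12 = comp (ff_map H2) (ff_map H1)
}.
End ModelDefs.

(** A model category (in the sense of Hovey): a category with finite limits and
    colimits, three classes of maps (weak equivalences, fibrations,
    cofibrations) which are subcategories, 2-out-of-3, retract axiom, lifting
    axioms and functorial factorizations. *)
Record ModelCategory := {
  mc_cat :> Category;
  weq : MorClass mc_cat;
  fib : MorClass mc_cat;
  cof : MorClass mc_cat;
  mc_terminal : exists T : mc_cat, is_terminal T;
  mc_initial : exists I : mc_cat, is_initial I;
  mc_pullbacks : has_pullbacks mc_cat;
  mc_pushouts : has_pushouts mc_cat;
  weq_subcat : subcat_class weq;
  fib_subcat : subcat_class fib;
  cof_subcat : subcat_class cof;
  two_of_three : forall (A B E : mc_cat) (f : hom A B) (g : hom B E),
      (weq f -> weq g -> weq (comp g f)) /\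
      (weq f -> weq (comp g f) -> weq g) /\
      (weq g -> weq (comp g f) -> weq f);
  weq_retract : retract_closed weq;
  fib_retract : retract_closed fib;
  cof_retract : retract_closed cof;
  lift_cof_trivfib : forall (A B E F : mc_cat) (i : hom A B) (p : hom E F),
      cof i -> fib p -> weq p -> llp i p;
  lift_trivcof_fib : forall (A B E F : mc_cat) (i : hom A B) (p : hom E F),
      cof i -> weq i -> fib p -> llp i p;
  fact_cof_trivfib : FunctorialFactorization cof (cap fib weq);
  fact_trivcof_fib : FunctorialFactorization (cap cof weq) fib
}.
Arguments weq {m A B} _.
Arguments fib {m A B} _.
Arguments cof {m A B} _.

(** * The category M(X,Y)_Hom of zig-zags X <~ U -> V ~> Y *)
Section ZigZag.
Variables (M : ModelCategory) (X Y : M).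

Record ZZ := {
  zU : M; zV : M;
  zw : hom zU X;
  zf : hom zU zV;
  zg : hom Y zV;
  zw_weq : weq zw;
  zg_weq : weq zg
}.

Record ZZhom (z z' : ZZ) := {
  za : hom (zU z) (zU z');
  zb : hom (zV z) (zV z');
  za_weq : weq za;
  zb_weq : weq zb;
  zh_w : comp (zw z') za = zw z;
  zh_f : comp (zf z') za = comp zb (zf z);
  zh_g : comp zb (zg z) = zg z'
}.

Lemma ZZhom_eq (z z' : ZZ) (h h' : ZZhom z z') :
  za h = za h' -> zb h = zb h' -> h = h'.
Proof.
  destruct h, h'; simpl; intros; subst; f_equal; apply proof_irrelevance.
Qed.

Definition ZZid (z : ZZ) : ZZhom z z.
Proof.
  refine {| za := idm (zU z); zb := idm (zV z) |}.
  - apply (proj1 (weq_subcat M)).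
  - apply (proj1 (weq_subcat M)).
  - apply comp_id_r.
  - rewrite comp_id_r, comp_id_l; reflexivity.
  - apply comp_id_l.
Defined.

Definition ZZcomp (z1 z2 z3 : ZZ) (k : ZZhom z2 z3) (h : ZZhom z1 z2) : ZZhom z1 z3.
Proof.
  refine {| za := comp (za k) (za h); zb := comp (zb k) (zb h) |}.
  - apply (proj2 (weq_subcat M)); [apply za_weq | apply za_weq].
  - apply (proj2 (weq_subcat M)); [apply zb_weq | apply zb_weq].
  - rewrite comp_assoc, (zh_w k); apply zh_w.
  - rewrite comp_assoc, (zh_f k), <- comp_assoc, (zh_f h), comp_assoc; reflexivity.
  - rewrite <- comp_assoc, (zh_g h); apply zh_g.
Defined.

Definition ZZcat : Category.
Proof.
  refine {| ob := ZZ; hom := ZZhom; idm := ZZid; comp := ZZcomp |}.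
  - intros; apply ZZhom_eq; simpl; apply comp_assoc.
  - intros; apply ZZhom_eq; simpl; apply comp_id_l.
  - intros; apply ZZhom_eq; simpl; apply comp_id_r.
Defined.

(** Objects of (WCofib)^{-1} M (WFib)^{-1}(X,Y): U -> X a trivial fibration,
    Y -> V a trivial cofibration. *)
Definition ZZ_WW (z : ZZcat) : Prop :=
  (fib (zw z) /\ weq (zw z)) /\ (cof (zg z) /\ weq (zg z)).

End ZigZag.

(* Two functorial replacements of a zig-zag X <~ U -> V <~ Y.  On the left, factor U -> X as a
   cofibration U -> U' followed by a trivial fibration U' -> X; by 2-out-of-3 U -> U' is a
   trivial cofibration, and pushing V out along it gives X <~ U' -> V' <~ Y with a natural map
   from the original zig-zag.  On the right, factor Y -> V as a trivial cofibration Y -> V''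
   followed by a fibration V'' -> V, which is then trivial, and pull U back along it; this
   maps naturally to the original zig-zag and keeps the left leg a trivial fibration.  So the
   right replacement of the left replacement lands in the subcategory, the left replacement
   preserves it, and the cospans  R L => L <= id  give the two required zig-zags. *)

From Stdlib Require Import ClassicalEpsilon.

Set Implicit Arguments.
Unset Strict Implicit.

Lemma nat_zigzag_cospan (C D : Category) (H1 H2 K : Functor C D) :
  NatTrans H1 K -> NatTrans H2 K -> nat_zigzag H1 H2.
Proof.
  intros a b; apply nzz_fwd with K; [exact a|].
  apply nzz_bwd with H2; [exact b | apply nzz_refl].
Qed.

Section FullSubcategory.
Variables (C : Category) (P : C -> Prop).

Definition restrict_functor (F : Functor C C) (HF : forall c, P c -> P (F c)) :
  Functor (FullSub P) (FullSub P).
Proof.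
  refine {| fobj := fun a : FullSub P =>
                      exist P (F (proj1_sig a)) (HF _ (proj2_sig a)) : FullSub P;
            fmap := fun a b (f : hom a b) => fmap F f |}.
  - intros a; exact (fmap_id F (proj1_sig a)).
  - intros a b c g f; exact (fmap_comp F g f).
Defined.

Definition corestrict_functor (F : Functor C C) (HF : forall c, P (F c)) :
  Functor C (FullSub P).
Proof.
  refine {| fobj := fun c => exist P (F c) (HF c) : FullSub P;
            fmap := fun a b (f : hom a b) => fmap F f |}.
  - intros a; exact (fmap_id F a).
  - intros a b c g f; exact (fmap_comp F g f).
Defined.

(* The homotopy inverse is [R L]; both composites are joined to the identity by [R L => L <= id]. *)
Lemma incl_homotopy_equivalence (L R : Functor C C)
    (eta : NatTrans (id_functor C) L) (eps : NatTrans R (id_functor C))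
    (HL : forall c, P c -> P (L c)) (HRL : forall c, P (R (L c))) :
  homotopy_equivalence (incl P).
Proof.
  exists (corestrict_functor (F := comp_functor R L) HRL). split.
  - apply nat_zigzag_cospan with L; [|exact eta].
    exists (fun c => component eps (L c)).
    intros c d f; exact (naturality eps (fmap L f)).
  - apply nat_zigzag_cospan with (restrict_functor HL).
    + exists (fun a => component eps (L (proj1_sig a))).
      intros a b f; exact (naturality eps (fmap L f)).
    + exists (fun a => component eta (proj1_sig a)).
      intros a b f; exact (naturality eta f).
Qed.

End FullSubcategory.

Lemma ff_map_comp_eq (C : Category) (L R : MorClass C) (F : FunctorialFactorization L R)
    (A B A' B' A'' B'' : C) (f : hom A B) (f' : hom A' B') (f'' : hom A'' B'')
    (u : hom A A') (v : hom B B') (u' : hom A' A'') (v' : hom B' B'')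
    (u'' : hom A A'') (v'' : hom B B'')
    (H1 : comp f' u = comp v f) (H2 : comp f'' u' = comp v' f')
    (H12 : comp f'' u'' = comp v'' f) :
  u'' = comp u' u -> v'' = comp v' v -> ff_map F H12 = comp (ff_map F H2) (ff_map F H1).
Proof. intros -> ->; apply (ff_map_comp F). Qed.

Section ChosenLimits.
Variable C : Category.

Record Pullback (A B Z : C) (f : hom A Z) (g : hom B Z) := {
  pb_ob : C;
  pb_l : hom pb_ob A;
  pb_r : hom pb_ob B;
  pb_comm : comp f pb_l = comp g pb_r;
  pb_univ : forall (Q : C) (q1 : hom Q A) (q2 : hom Q B), comp f q1 = comp g q2 ->
      exists! u : hom Q pb_ob, comp pb_l u = q1 /\ comp pb_r u = q2
}.

Record Pushout (Z A B : C) (f : hom Z A) (g : hom Z B) := {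
  po_ob : C;
  po_l : hom A po_ob;
  po_r : hom B po_ob;
  po_comm : comp po_l f = comp po_r g;
  po_univ : forall (Q : C) (q1 : hom A Q) (q2 : hom B Q), comp q1 f = comp q2 g ->
      exists! u : hom po_ob Q, comp u po_l = q1 /\ comp u po_r = q2
}.

Definition chosen_pullback (HC : has_pullbacks C) (A B Z : C) (f : hom A Z) (g : hom B Z) :
  Pullback f g.
Proof.
  destruct (constructive_indefinite_description _ (HC _ _ _ f g)) as [P HP].
  destruct (constructive_indefinite_description _ HP) as [p1 HP1].
  destruct (constructive_indefinite_description _ HP1) as [p2 [Hc Hu]].
  exact (Build_Pullback Hc Hu).
Defined.

Definition chosen_pushout (HC : has_pushouts C) (Z A B : C) (f : hom Z A) (g : hom Z B) :
  Pushout f g.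
Proof.
  destruct (constructive_indefinite_description _ (HC _ _ _ f g)) as [P HP].
  destruct (constructive_indefinite_description _ HP) as [i1 HP1].
  destruct (constructive_indefinite_description _ HP1) as [i2 [Hc Hu]].
  exact (Build_Pushout Hc Hu).
Defined.

Section PullbackLift.
Variables (A B Z : C) (f : hom A Z) (g : hom B Z) (P : Pullback f g).

Definition pb_lift (Q : C) (q1 : hom Q A) (q2 : hom Q B) (H : comp f q1 = comp g q2) :
  hom Q (pb_ob P) :=
  proj1_sig (constructive_indefinite_description _ (pb_univ P H)).

Lemma pb_lift_l (Q : C) (q1 : hom Q A) (q2 : hom Q B) (H : comp f q1 = comp g q2) :
  comp (pb_l P) (pb_lift H) = q1.
Proof. exact (proj1 (proj1 (proj2_sig (constructive_indefinite_description _ (pb_univ P H))))). Qed.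

Lemma pb_lift_r (Q : C) (q1 : hom Q A) (q2 : hom Q B) (H : comp f q1 = comp g q2) :
  comp (pb_r P) (pb_lift H) = q2.
Proof. exact (proj2 (proj1 (proj2_sig (constructive_indefinite_description _ (pb_univ P H))))). Qed.

Lemma pb_hom_ext (Q : C) (u u' : hom Q (pb_ob P)) :
  comp (pb_l P) u = comp (pb_l P) u' -> comp (pb_r P) u = comp (pb_r P) u' -> u = u'.
Proof.
  intros H1 H2.
  assert (Hc : comp f (comp (pb_l P) u) = comp g (comp (pb_r P) u)).
  { rewrite !comp_assoc, (pb_comm P); reflexivity. }
  destruct (pb_univ P Hc) as [x [_ Hx]].
  now rewrite <- (Hx u (conj eq_refl eq_refl)), <- (Hx u' (conj (eq_sym H1) (eq_sym H2))).
Qed.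

End PullbackLift.

Section PushoutDesc.
Variables (Z A B : C) (f : hom Z A) (g : hom Z B) (P : Pushout f g).

Definition po_desc (Q : C) (q1 : hom A Q) (q2 : hom B Q) (H : comp q1 f = comp q2 g) :
  hom (po_ob P) Q :=
  proj1_sig (constructive_indefinite_description _ (po_univ P H)).

Lemma po_desc_l (Q : C) (q1 : hom A Q) (q2 : hom B Q) (H : comp q1 f = comp q2 g) :
  comp (po_desc H) (po_l P) = q1.
Proof. exact (proj1 (proj1 (proj2_sig (constructive_indefinite_description _ (po_univ P H))))). Qed.

Lemma po_desc_r (Q : C) (q1 : hom A Q) (q2 : hom B Q) (H : comp q1 f = comp q2 g) :
  comp (po_desc H) (po_r P) = q2.
Proof. exact (proj2 (proj1 (proj2_sig (constructive_indefinite_description _ (po_univ P H))))). Qed.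

Lemma po_hom_ext (Q : C) (u u' : hom (po_ob P) Q) :
  comp u (po_l P) = comp u' (po_l P) -> comp u (po_r P) = comp u' (po_r P) -> u = u'.
Proof.
  intros H1 H2.
  assert (Hc : comp (comp u (po_l P)) f = comp (comp u (po_r P)) g).
  { rewrite <- !comp_assoc, (po_comm P); reflexivity. }
  destruct (po_univ P Hc) as [x [_ Hx]].
  now rewrite <- (Hx u (conj eq_refl eq_refl)), <- (Hx u' (conj (eq_sym H1) (eq_sym H2))).
Qed.

End PushoutDesc.

End ChosenLimits.

Section ModelCategoryFacts.
Variable M : ModelCategory.

Lemma weq_comp (A B E : M) (f : hom A B) (g : hom B E) :
  weq f -> weq g -> weq (comp g f).
Proof. apply (two_of_three f g). Qed.

Lemma weq_cancel_r (A B E : M) (f : hom A B) (g : hom B E) :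
  weq f -> weq (comp g f) -> weq g.
Proof. apply (two_of_three f g). Qed.

Lemma weq_cancel_l (A B E : M) (f : hom A B) (g : hom B E) :
  weq g -> weq (comp g f) -> weq f.
Proof. apply (two_of_three f g). Qed.

(* Retract argument: [p] is a retract of the trivial fibration in its factorization. *)
Lemma trivfib_of_rlp_cof (E F : M) (p : hom E F) :
  (forall (A B : M) (i : hom A B), cof i -> llp i p) -> fib p /\ weq p.
Proof.
  intros Hlift.
  set (fa := fact_cof_trivfib M).
  pose proof (ff_fact fa p) as Hfact.
  destruct (Hlift _ _ _ (ff_L fa p) (idm E) (ff_r fa p)) as [h [Hhi Hph]].
  { rewrite comp_id_r; symmetry; exact Hfact. }
  assert (Hretract : is_retract p (ff_r fa p)).
  { exists (ff_l fa p), h, (idm F), (idm F).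
    rewrite !comp_id_l; repeat split; assumption. }
  destruct (ff_R fa p) as [Hfib Hweq].
  split; [exact (fib_retract Hretract Hfib) | exact (weq_retract Hretract Hweq)].
Qed.

Lemma trivcof_of_llp_fib (A B : M) (i : hom A B) :
  (forall (E F : M) (p : hom E F), fib p -> llp i p) -> cof i /\ weq i.
Proof.
  intros Hlift.
  set (fa := fact_trivcof_fib M).
  pose proof (ff_fact fa i) as Hfact.
  destruct (Hlift _ _ _ (ff_R fa i) (ff_l fa i) (idm B)) as [h [Hhi Hph]].
  { rewrite comp_id_l; exact Hfact. }
  assert (Hretract : is_retract i (ff_l fa i)).
  { exists (idm A), (idm A), h, (ff_r fa i).
    rewrite !comp_id_r; repeat split; auto. }
  destruct (ff_L fa i) as [Hcof Hweq].
  split; [exact (cof_retract Hretract Hcof) | exact (weq_retract Hretract Hweq)].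
Qed.

Lemma pullback_trivfib (A B Z : M) (f : hom A Z) (g : hom B Z) (P : Pullback f g) :
  fib g -> weq g -> fib (pb_l P) /\ weq (pb_l P).
Proof.
  intros Hfib Hweq; apply trivfib_of_rlp_cof; intros S T i Hi u v Huv.
  assert (Hsq : comp g (comp (pb_r P) u) = comp (comp f v) i).
  { rewrite comp_assoc, <- (pb_comm P), <- comp_assoc, Huv, comp_assoc; reflexivity. }
  destruct (lift_cof_trivfib Hi Hfib Hweq Hsq) as [k [Hki Hgk]].
  exists (pb_lift P (eq_sym Hgk)); split.
  - apply pb_hom_ext.
    + rewrite comp_assoc, pb_lift_l; symmetry; exact Huv.
    + rewrite comp_assoc, pb_lift_r; exact Hki.
  - apply pb_lift_l.
Qed.

Lemma pushout_trivcof (Z A B : M) (f : hom Z A) (g : hom Z B) (P : Pushout f g) :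
  cof f -> weq f -> cof (po_r P) /\ weq (po_r P).
Proof.
  intros Hcof Hweq; apply trivcof_of_llp_fib; intros E F p Hp u v Huv.
  assert (Hsq : comp p (comp u g) = comp (comp v (po_l P)) f).
  { rewrite <- !comp_assoc, (po_comm P), comp_assoc, Huv, comp_assoc; reflexivity. }
  destruct (lift_trivcof_fib Hcof Hweq Hp Hsq) as [k [Hkf Hpk]].
  exists (po_desc P Hkf); split.
  - apply po_desc_r.
  - apply po_hom_ext.
    + rewrite <- comp_assoc, po_desc_l; exact Hpk.
    + rewrite <- comp_assoc, po_desc_r; exact Huv.
Qed.

End ModelCategoryFacts.

Section Replacements.
Variables (M : ModelCategory) (X Y : M).
Local Notation ZZC := (ZZcat X Y).
Local Notation cof_trivfib := (fact_cof_trivfib M).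
Local Notation trivcof_fib := (fact_trivcof_fib M).

Definition lrep_U (z : ZZ X Y) : M := ff_ob cof_trivfib (zw z).
Definition lrep_i (z : ZZ X Y) : hom (zU z) (lrep_U z) := ff_l cof_trivfib (zw z).
Definition lrep_p (z : ZZ X Y) : hom (lrep_U z) X := ff_r cof_trivfib (zw z).
Definition lrep_po (z : ZZ X Y) : Pushout (lrep_i z) (zf z) :=
  chosen_pushout (@mc_pushouts M) _ _.

Lemma lrep_fact (z : ZZ X Y) : comp (lrep_p z) (lrep_i z) = zw z.
Proof. apply (ff_fact cof_trivfib). Qed.

Lemma lrep_p_trivfib (z : ZZ X Y) : fib (lrep_p z) /\ weq (lrep_p z).
Proof. exact (ff_R cof_trivfib (zw z)). Qed.

Lemma lrep_i_trivcof (z : ZZ X Y) : cof (lrep_i z) /\ weq (lrep_i z).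
Proof.
  split; [exact (ff_L cof_trivfib (zw z))|].
  apply weq_cancel_l with (g := lrep_p z); [apply lrep_p_trivfib|].
  rewrite lrep_fact; apply zw_weq.
Qed.

Lemma lrep_po_r_trivcof (z : ZZ X Y) : cof (po_r (lrep_po z)) /\ weq (po_r (lrep_po z)).
Proof. apply pushout_trivcof; apply lrep_i_trivcof. Qed.

Lemma lrep_g_weq (z : ZZ X Y) : weq (comp (po_r (lrep_po z)) (zg z)).
Proof. apply weq_comp; [apply zg_weq | apply lrep_po_r_trivcof]. Qed.

Definition lrep_obj (z : ZZ X Y) : ZZ X Y :=
  {| zU := lrep_U z; zV := po_ob (lrep_po z);
     zw := lrep_p z; zf := po_l (lrep_po z); zg := comp (po_r (lrep_po z)) (zg z);
     zw_weq := proj2 (lrep_p_trivfib z); zg_weq := lrep_g_weq z |}.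

Section LeftReplacementHom.
Variables (z z' : ZZ X Y) (h : ZZhom z z').

Lemma lrep_homU_square : comp (zw z') (za h) = comp (idm X) (zw z).
Proof. rewrite comp_id_l; apply zh_w. Qed.

Definition lrep_homU : hom (lrep_U z) (lrep_U z') := ff_map cof_trivfib lrep_homU_square.

Lemma lrep_homU_i : comp lrep_homU (lrep_i z) = comp (lrep_i z') (za h).
Proof. apply (ff_map_l cof_trivfib). Qed.

Lemma lrep_homU_p : comp (lrep_p z') lrep_homU = lrep_p z.
Proof. etransitivity; [apply (ff_map_r cof_trivfib) | apply comp_id_l]. Qed.

Lemma lrep_homV_square :
  comp (comp (po_l (lrep_po z')) lrep_homU) (lrep_i z)
  = comp (comp (po_r (lrep_po z')) (zb h)) (zf z).
Proof.
  rewrite <- !comp_assoc, lrep_homU_i, <- (zh_f h), !comp_assoc, (po_comm (lrep_po z')).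
  reflexivity.
Qed.

Definition lrep_homV : hom (po_ob (lrep_po z)) (po_ob (lrep_po z')) :=
  po_desc (lrep_po z) lrep_homV_square.

Lemma lrep_homV_l : comp lrep_homV (po_l (lrep_po z)) = comp (po_l (lrep_po z')) lrep_homU.
Proof. apply po_desc_l. Qed.

Lemma lrep_homV_r : comp lrep_homV (po_r (lrep_po z)) = comp (po_r (lrep_po z')) (zb h).
Proof. apply po_desc_r. Qed.

Lemma lrep_homU_weq : weq lrep_homU.
Proof.
  apply weq_cancel_l with (g := lrep_p z'); [apply lrep_p_trivfib|].
  rewrite lrep_homU_p; apply lrep_p_trivfib.
Qed.

Lemma lrep_homV_weq : weq lrep_homV.
Proof.
  apply weq_cancel_r with (f := po_r (lrep_po z)); [apply lrep_po_r_trivcof|].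
  rewrite lrep_homV_r; apply weq_comp; [apply zb_weq | apply lrep_po_r_trivcof].
Qed.

Lemma lrep_homV_g :
  comp lrep_homV (comp (po_r (lrep_po z)) (zg z)) = comp (po_r (lrep_po z')) (zg z').
Proof. rewrite comp_assoc, lrep_homV_r, <- comp_assoc, (zh_g h); reflexivity. Qed.

Definition lrep_hom : ZZhom (lrep_obj z) (lrep_obj z') :=
  @Build_ZZhom _ _ _ (lrep_obj z) (lrep_obj z') lrep_homU lrep_homV
    lrep_homU_weq lrep_homV_weq lrep_homU_p (eq_sym lrep_homV_l) lrep_homV_g.

End LeftReplacementHom.

Lemma lrep_hom_id (z : ZZC) : lrep_hom (idm z) = idm (lrep_obj z : ZZC).
Proof.
  assert (HU : lrep_homU (idm z) = idm (lrep_U z)) by apply (ff_map_id cof_trivfib).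
  apply ZZhom_eq; [exact HU|].
  change (lrep_homV (idm z) = idm (po_ob (lrep_po z))).
  apply po_hom_ext.
  - rewrite lrep_homV_l, HU, comp_id_l, comp_id_r; reflexivity.
  - rewrite lrep_homV_r; cbn; rewrite comp_id_l, comp_id_r; reflexivity.
Qed.

Lemma lrep_hom_comp (z1 z2 z3 : ZZC) (g : hom z2 z3) (f : hom z1 z2) :
  lrep_hom (comp g f) = @comp ZZC _ _ _ (lrep_hom g) (lrep_hom f).
Proof.
  assert (HU : lrep_homU (comp g f) = comp (lrep_homU g) (lrep_homU f)).
  { apply (ff_map_comp_eq cof_trivfib); [reflexivity | symmetry; apply comp_id_l]. }
  apply ZZhom_eq; [exact HU|].
  change (lrep_homV (comp g f) = comp (lrep_homV g) (lrep_homV f)).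
  apply po_hom_ext.
  - rewrite lrep_homV_l, HU, <- comp_assoc, lrep_homV_l, !comp_assoc, lrep_homV_l.
    reflexivity.
  - rewrite lrep_homV_r, <- comp_assoc, lrep_homV_r, !comp_assoc, lrep_homV_r.
    exact (comp_assoc (po_r (lrep_po z3)) (zb g) (zb f)).
Qed.

Definition lrep : Functor ZZC ZZC :=
  {| fobj := lrep_obj : ZZC -> ZZC; fmap := lrep_hom;
     fmap_id := lrep_hom_id; fmap_comp := lrep_hom_comp |}.

Definition lrep_unit : NatTrans (id_functor ZZC) lrep.
Proof.
  exists (fun z => @Build_ZZhom _ _ _ z (lrep_obj z) (lrep_i z) (po_r (lrep_po z))
    (proj2 (lrep_i_trivcof z)) (proj2 (lrep_po_r_trivcof z))
    (lrep_fact z) (po_comm (lrep_po z)) eq_refl).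
  intros z z' h; apply ZZhom_eq; simpl.
  - symmetry; apply lrep_homU_i.
  - symmetry; apply lrep_homV_r.
Defined.


Definition rrep_V (z : ZZ X Y) : M := ff_ob trivcof_fib (zg z).
Definition rrep_j (z : ZZ X Y) : hom Y (rrep_V z) := ff_l trivcof_fib (zg z).
Definition rrep_q (z : ZZ X Y) : hom (rrep_V z) (zV z) := ff_r trivcof_fib (zg z).
Definition rrep_pb (z : ZZ X Y) : Pullback (zf z) (rrep_q z) :=
  chosen_pullback (@mc_pullbacks M) _ _.

Lemma rrep_fact (z : ZZ X Y) : comp (rrep_q z) (rrep_j z) = zg z.
Proof. apply (ff_fact trivcof_fib). Qed.

Lemma rrep_j_trivcof (z : ZZ X Y) : cof (rrep_j z) /\ weq (rrep_j z).
Proof. exact (ff_L trivcof_fib (zg z)). Qed.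

Lemma rrep_q_trivfib (z : ZZ X Y) : fib (rrep_q z) /\ weq (rrep_q z).
Proof.
  split; [exact (ff_R trivcof_fib (zg z))|].
  apply weq_cancel_r with (f := rrep_j z); [apply rrep_j_trivcof|].
  rewrite rrep_fact; apply zg_weq.
Qed.

Lemma rrep_pb_l_trivfib (z : ZZ X Y) : fib (pb_l (rrep_pb z)) /\ weq (pb_l (rrep_pb z)).
Proof. apply pullback_trivfib; apply rrep_q_trivfib. Qed.

Lemma rrep_w_weq (z : ZZ X Y) : weq (comp (zw z) (pb_l (rrep_pb z))).
Proof. apply weq_comp; [apply rrep_pb_l_trivfib | apply zw_weq]. Qed.

Definition rrep_obj (z : ZZ X Y) : ZZ X Y :=
  {| zU := pb_ob (rrep_pb z); zV := rrep_V z;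
     zw := comp (zw z) (pb_l (rrep_pb z)); zf := pb_r (rrep_pb z); zg := rrep_j z;
     zw_weq := rrep_w_weq z; zg_weq := proj2 (rrep_j_trivcof z) |}.

Section RightReplacementHom.
Variables (z z' : ZZ X Y) (h : ZZhom z z').

Lemma rrep_homV_square : comp (zg z') (idm Y) = comp (zb h) (zg z).
Proof. rewrite comp_id_r; symmetry; apply zh_g. Qed.

Definition rrep_homV : hom (rrep_V z) (rrep_V z') := ff_map trivcof_fib rrep_homV_square.

Lemma rrep_homV_j : comp rrep_homV (rrep_j z) = rrep_j z'.
Proof. etransitivity; [apply (ff_map_l trivcof_fib) | apply comp_id_r]. Qed.

Lemma rrep_homV_q : comp (rrep_q z') rrep_homV = comp (zb h) (rrep_q z).
Proof. apply (ff_map_r trivcof_fib). Qed.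

Lemma rrep_homU_square :
  comp (zf z') (comp (za h) (pb_l (rrep_pb z)))
  = comp (rrep_q z') (comp rrep_homV (pb_r (rrep_pb z))).
Proof.
  rewrite !comp_assoc, (zh_f h), rrep_homV_q, <- !comp_assoc, (pb_comm (rrep_pb z)).
  reflexivity.
Qed.

Definition rrep_homU : hom (pb_ob (rrep_pb z)) (pb_ob (rrep_pb z')) :=
  pb_lift (rrep_pb z') rrep_homU_square.

Lemma rrep_homU_l : comp (pb_l (rrep_pb z')) rrep_homU = comp (za h) (pb_l (rrep_pb z)).
Proof. apply pb_lift_l. Qed.

Lemma rrep_homU_r : comp (pb_r (rrep_pb z')) rrep_homU = comp rrep_homV (pb_r (rrep_pb z)).
Proof. apply pb_lift_r. Qed.

Lemma rrep_homV_weq : weq rrep_homV.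
Proof.
  apply weq_cancel_l with (g := rrep_q z'); [apply rrep_q_trivfib|].
  rewrite rrep_homV_q; apply weq_comp; [apply rrep_q_trivfib | apply zb_weq].
Qed.

Lemma rrep_homU_weq : weq rrep_homU.
Proof.
  apply weq_cancel_l with (g := pb_l (rrep_pb z')); [apply rrep_pb_l_trivfib|].
  rewrite rrep_homU_l; apply weq_comp; [apply rrep_pb_l_trivfib | apply za_weq].
Qed.

Lemma rrep_homU_w :
  comp (comp (zw z') (pb_l (rrep_pb z'))) rrep_homU = comp (zw z) (pb_l (rrep_pb z)).
Proof. rewrite <- comp_assoc, rrep_homU_l, comp_assoc, (zh_w h); reflexivity. Qed.

Definition rrep_hom : ZZhom (rrep_obj z) (rrep_obj z') :=
  @Build_ZZhom _ _ _ (rrep_obj z) (rrep_obj z') rrep_homU rrep_homV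
    rrep_homU_weq rrep_homV_weq rrep_homU_w rrep_homU_r rrep_homV_j.

End RightReplacementHom.

Lemma rrep_hom_id (z : ZZC) : rrep_hom (idm z) = idm (rrep_obj z : ZZC).
Proof.
  assert (HV : rrep_homV (idm z) = idm (rrep_V z)) by apply (ff_map_id trivcof_fib).
  apply ZZhom_eq; [|exact HV].
  change (rrep_homU (idm z) = idm (pb_ob (rrep_pb z))).
  apply pb_hom_ext.
  - rewrite rrep_homU_l; cbn; rewrite comp_id_l, comp_id_r; reflexivity.
  - rewrite rrep_homU_r, HV, comp_id_l, comp_id_r; reflexivity.
Qed.

Lemma rrep_hom_comp (z1 z2 z3 : ZZC) (g : hom z2 z3) (f : hom z1 z2) :
  rrep_hom (comp g f) = @comp ZZC _ _ _ (rrep_hom g) (rrep_hom f).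
Proof.
  assert (HV : rrep_homV (comp g f) = comp (rrep_homV g) (rrep_homV f)).
  { apply (ff_map_comp_eq trivcof_fib); [symmetry; apply comp_id_l | reflexivity]. }
  apply ZZhom_eq; [|exact HV].
  change (rrep_homU (comp g f) = comp (rrep_homU g) (rrep_homU f)).
  apply pb_hom_ext.
  - rewrite rrep_homU_l, comp_assoc, rrep_homU_l, <- !comp_assoc, rrep_homU_l.
    exact (eq_sym (comp_assoc (za g) (za f) (pb_l (rrep_pb z1)))).
  - rewrite rrep_homU_r, HV, comp_assoc, rrep_homU_r, <- !comp_assoc, rrep_homU_r.
    reflexivity.
Qed.

Definition rrep : Functor ZZC ZZC :=
  {| fobj := rrep_obj : ZZC -> ZZC; fmap := rrep_hom;
     fmap_id := rrep_hom_id; fmap_comp := rrep_hom_comp |}.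

Definition rrep_counit : NatTrans rrep (id_functor ZZC).
Proof.
  exists (fun z => @Build_ZZhom _ _ _ (rrep_obj z) z (pb_l (rrep_pb z)) (rrep_q z)
    (proj2 (rrep_pb_l_trivfib z)) (proj2 (rrep_q_trivfib z))
    eq_refl (pb_comm (rrep_pb z)) (rrep_fact z)).
  intros z z' h; apply ZZhom_eq; simpl.
  - apply rrep_homU_l.
  - apply rrep_homV_q.
Defined.

Lemma lrep_WW (z : ZZC) : ZZ_WW z -> ZZ_WW (lrep z).
Proof.
  intros [_ [Hcof _]]; split; [apply lrep_p_trivfib|]; split.
  - apply (proj2 (cof_subcat M)); [exact Hcof | apply lrep_po_r_trivcof].
  - apply lrep_g_weq.
Qed.

Lemma rrep_WW (z : ZZC) : fib (zw z) -> ZZ_WW (rrep z).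
Proof.
  intros Hfib; split; [split|].
  - apply (proj2 (fib_subcat M)); [apply rrep_pb_l_trivfib | exact Hfib].
  - apply rrep_w_weq.
  - apply rrep_j_trivcof.
Qed.

End Replacements.

Theorem proposition2p1 (M : ModelCategory) (X Y : M) :
  homotopy_equivalence (incl (@ZZ_WW M X Y)).
Proof.
  apply incl_homotopy_equivalence with (lrep X Y) (rrep X Y).
  - exact (lrep_unit X Y).
  - exact (rrep_counit X Y).
  - apply lrep_WW.
  - intros z; apply rrep_WW, lrep_p_trivfib.
Qed.
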